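(* The radical (maximal solvable ideal) of the Lie algebra $L_0$ is spanned as a $k$-vector space by the following elements of $L_0$, where $\bar\alpha=\{\alpha_1,\dots,\alpha_n\}$ runs over all classes of parallel arrows of $Q$: (1) $\sum_{\alpha_i\in S}(\alpha_i,\alpha_i)$ for every equivalence class $S\in\bar\alpha/\!\approx$; (2) $(\alpha_i,\alpha_j)$ for $i\neq j$ whenever $(\alpha_i,\alpha_j)\in L_0$ and $(\alpha_j,\alpha_i)\notin L_0$ (i.e. $\alpha_j\le_{\langle Z\rangle}\alpha_i$ but not $\alpha_i\le_{\langle Z\rangle}\alpha_j$); (3) if $\operatorname{char}k=2$: $(\alpha_{i_1},\alpha_{i_2})$, $(\alpha_{i_2},\alpha_{i_1})$ and $(\alpha_{i_1},\alpha_{i_1})$ for every class $S=\{\alpha_{i_1},\alpha_{i_2}\}\in\bar\alpha/\!\approx$ with exactly two elements.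
   Context: Let $k$ be an algebraically closed field and $Q$ a finite connected quiver; $Q_n$ = paths of length $n$ ($Q_0$ vertices, $Q_1$ arrows), $s,t$ = source, terminus. Let $Z$ be a minimal set of paths of length $\ge2$ (no proper subpath of an element of $Z$ lies in $Z$) with $\Lambda=kQ/\langle Z\rangle$ finite dimensional; $B$ = paths (vertices included) not containing an element of $Z$ as subpath, $B_n=B\cap Q_n$. Paths are parallel if they have the same source and terminus; $X//Y$ = pairs of parallel paths in $X\times Y$, $k(X//Y)$ the vector space with that basis. For a path $\varepsilon$ and $(a,\gamma)\in Q_1//B$, $\varepsilon^{(a,\gamma)}$ = sum of all paths in $B$ obtained by replacing one occurrence of $a$ in $\varepsilon$ by $\gamma$ ($0$ if none); $(\eta,\varepsilon^{(a,\gamma)})=\sum_i(\eta,\varepsilon_i)$ if $\varepsilon^{(a,\gamma)}=\sum_i\varepsilon_i$. $\psi_0:k(Q_0//B)\to k(Q_1//B)$, $(e,\gamma)\mapsto\sum_{a\in Q_1,\,s(a)=e,\,a\gamma\in B}(a,a\gamma)-\sum_{a\in Q_1,\,t(a)=e,\,\gamma a\in B}(a,\gamma a)$; $\psi_1:k(Q_1//B)\to k(Z//B)$, $(a,\gamma)\mapsto\sum_{p\in Z}(p,p^{(a,\gamma)})$. With the bracket $[(a,\gamma),(b,\varepsilon)]=(b,\varepsilon^{(a,\gamma)})-(a,\gamma^{(b,\varepsilon)})$, $\operatorname{Ker}\psi_1$ is a Lie algebra, $\operatorname{Im}\psi_0$ an ideal, and $\operatorname{Ker}\psi_1/\operatorname{Im}\psi_0\cong\operatorname{H}^1(\Lambda,\Lambda)$.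 $L_0$ is the Lie subalgebra of $\operatorname{Ker}\psi_1/\operatorname{Im}\psi_0$ formed by the classes of elements of $k(Q_1//Q_1)\cap\operatorname{Ker}\psi_1$; for $(a,b)\in Q_1//Q_1$ we say $(a,b)\in L_0$ if $(a,b)\in\operatorname{Ker}\psi_1$ and then also write $(a,b)$ for its class; its bracket is $[(a,c),(b,d)]=\delta_{a,d}(b,c)-\delta_{b,c}(a,d)$. For parallel arrows $a,b$ write $a\le_{\langle Z\rangle}b$ if $p^{(b,a)}=0$ for every $p\in Z$ (equivalently $(b,a)\in L_0$). Parallelism is an equivalence relation on $Q_1$; its classes are the classes of parallel arrows. On each class $\bar\alpha$, $a\approx b$ means $a\le_{\langle Z\rangle}b$ and $b\le_{\langle Z\rangle}a$; $\bar\alpha/\!\approx$ is the set of its equivalence classes. *)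

From HB Require Import structures.
From mathcomp Require Import all_boot all_order all_algebra.
From mathcomp Require Import boolp.
Set Implicit Arguments. Unset Strict Implicit. Unset Printing Implicit Defensive.
Import GRing.Theory.
Local Open Scope ring_scope.

(* A path of positive length is the nonempty list of its arrows in the order
   in which they are traversed (so consecutive arrows a, b satisfy t a = s b).
   Trivial paths (vertices) play no role below except that they belong to B
   and are finitely many. *)
Section QuiverDefs.
Variables (V A : finType) (s t : A -> V).

Definition par (a b : A) : bool := (s a == s b) && (t a == t b).

Definition quiver_connected : Prop :=
  forall v w : V,
    connect (fun x y => [exists a, ((s a == x) && (t a == y))
                                   || ((s a == y) && (t a == x))]) v w.

Definition is_path (p : seq A) : bool :=
  match p with [::] => false | a :: p' => path (fun x y => t x == s y) a p' end.

Variable Z : pred (seq A).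

Definition inB (p : seq A) : Prop := is_path p /\ forall z, Z z -> ~~ infix z p.

Definition Z_paths_len_ge2 : Prop := forall p, Z p -> is_path p /\ (2 <= size p)%N.
Definition Z_minimal : Prop := forall p q, Z p -> Z q -> infix q p -> q = p.
(* Lambda = kQ/<Z> finite dimensional, i.e. its basis B is finite *)
Definition B_finite : Prop := exists r : seq (seq A), forall p, inB p -> p \in r.

Variable k : fieldType.

(* k(Q1 x Q1): coefficient functions; k(Q1//Q1) = those supported on
   parallel pairs *)
Definition W := {ffun A * A -> k}.
Definition scl (c : k) (x : W) : W := [ffun i => c * x i].
Definition delta (a b : A) : W := [ffun ab => (ab == (a, b))%:R].
Definition in_kQ1Q1 (x : W) : Prop := forall a b, ~~ par a b -> x (a, b) = 0.

(* coefficient of the path q in p^{(a,b)} (sum of the paths of B obtained by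
   replacing one occurrence of the arrow a in p by the arrow b) *)
Definition repl_coef (p : seq A) (a b : A) (q : seq A) : k :=
  if `[< inB q >] then
    (#|[set i : 'I_(size p) | (nth a p i == a) && (set_nth a p i b == q)]|)%:R
  else 0.

(* coefficient of the basis element (p, q) of k(Z//B) in psi_1(x) *)
Definition psi1_coef (x : W) (p q : seq A) : k :=
  \sum_(ab : A * A) x ab * repl_coef p ab.1 ab.2 q.

Definition K0 (x : W) : Prop :=
  in_kQ1Q1 x /\ forall p q, Z p -> psi1_coef x p q = 0.

Definition inL0 (a b : A) : Prop := par a b /\ K0 (delta a b).

Definition leZ (a b : A) : Prop := forall p q, Z p -> repl_coef p b a q = 0.
Definition approxZ (a b : A) : Prop := leZ a b /\ leZ b a.

Definition psi0e (e : V) : W :=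
  [ffun ab => if ab.1 == ab.2 then (s ab.1 == e)%:R - (t ab.1 == e)%:R else 0].

Definition lie (x y : W) : W :=
  \sum_(ac : A * A) \sum_(bd : A * A)
     scl (x ac * y bd)
       (scl (ac.1 == bd.2)%:R (delta bd.1 ac.2)
        - scl (bd.1 == ac.2)%:R (delta ac.1 bd.2)).

Definition spanW (P : W -> Prop) : W -> Prop := fun x =>
  exists r : seq W, (forall y, y \in r -> P y) /\
    exists c : W -> k, x = \sum_(y <- r) scl (c y) y.
Definition sub_set (P Q : W -> Prop) : Prop := forall x, P x -> Q x.
Definition is_subspace (U : W -> Prop) : Prop :=
  U 0 /\ (forall x y, U x -> U y -> U (x + y)) /\ (forall c x, U x -> U (scl c x)).
Definition addS (U1 U2 : W -> Prop) : W -> Prop :=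
  fun z => exists u v, U1 u /\ U2 v /\ z = u + v.
Definition brk (U1 U2 : W -> Prop) : W -> Prop :=
  spanW (fun z => exists x y, U1 x /\ U2 y /\ z = lie x y).

(* Im psi_0 /\ k(Q1//Q1) = psi_0(k(Q0//B_0)) = spanW of the psi_0(e,e) *)
Definition D0 : W -> Prop := spanW (fun x => exists e, x = psi0e e).

(* L_0 = (k(Q1//Q1) /\ Ker psi_1) / D0.  Subspaces of L_0 are represented by
   their preimages U with D0 <= U <= K0. *)
Fixpoint derL0 (I : W -> Prop) (n : nat) : W -> Prop :=
  match n with
  | 0 => I
  | n'.+1 => addS (brk (derL0 I n') (derL0 I n')) D0
  end.

Definition L0_ideal (I : W -> Prop) : Prop :=
  [/\ is_subspace I, sub_set D0 I, sub_set I K0 &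
      forall x y, K0 x -> I y -> I (lie x y)].

Definition L0_solvable (I : W -> Prop) : Prop := exists n, sub_set (derL0 I n) D0.

Definition L0_radical (R : W -> Prop) : Prop :=
  [/\ L0_ideal R, L0_solvable R &
      forall I, L0_ideal I -> L0_solvable I -> sub_set I R].

Definition rad_gens (x : W) : Prop :=
  (exists a : A, x = [ffun bc : A * A =>
      if `[< bc.1 = bc.2 /\ par a bc.1 /\ approxZ a bc.1 >] then 1 else 0])
  \/ (exists ai aj : A, [/\ ai != aj, par ai aj, inL0 ai aj, ~ inL0 aj ai &
                            x = delta ai aj])
  \/ ((2%N \in [pchar k]) /\
      exists a1 a2 : A, [/\ a1 != a2, par a1 a2, approxZ a1 a2,
         (forall b, par a1 b -> approxZ a1 b -> b = a1 \/ b = a2) &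
         [\/ x = delta a1 a2, x = delta a2 a1 | x = delta a1 a1]]).

End QuiverDefs.

From HB Require Import structures.
From mathcomp Require Import all_boot all_order all_algebra.
From mathcomp Require Import boolp.
From mathcomp Require Import ring zify.
Set Implicit Arguments. Unset Strict Implicit. Unset Printing Implicit Defensive.
Import GRing.Theory.
Local Open Scope ring_scope.

(** An element of k(Q1//Q1) lies in Ker psi_1 exactly when its support lies in
    the relation "u, v parallel and v <=_<Z> u": distinct one-arrow replacements
    in a path of Z give distinct paths, so psi_1 cannot cancel anything. By the
    minimality of Z this relation is a preorder, so k(Q1//Q1) /\ Ker psi_1 is a
    Lie algebra of matrices supported on a preorder: the product of the gl's of
    the ~-classes, extended by a nilpotent ideal, with D0 central.  Its radical
    modulo D0 is therefore made of the off-block part, the scalars of each block,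
    and the whole block of a two-element class in characteristic 2 (gl_2 is then
    solvable).  That preimage is an ideal whose derived series falls into D0
    after #|A| + 3 steps, since each bracket of off-block elements strictly
    shrinks the up-set of the row index.  Conversely, a solvable ideal cannot
    have a nonzero entry in a non-solvable block: bracketing with matrix units
    would produce a matrix unit of that block, hence a perfect copy of sl_2 or
    sl_3 inside every derived term. *)

Lemma mul_eq0_by_contra (k : fieldType) (p q : k) :
  (p != 0 -> q != 0 -> False) -> p * q = 0.
Proof.
move=> H; have [->|Hp] := eqVneq p 0; first by rewrite mul0r.
have [->|Hq] := eqVneq q 0; first by rewrite mulr0.
by case: (H Hp Hq).
Qed.

Lemma sum_supp1 (I : finType) (k : fieldType) (F : I -> k) i0 :
  (forall i, i != i0 -> F i = 0) -> \sum_i F i = F i0.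
Proof. by move=> H; rewrite (bigD1 i0) //= big1 ?addr0 // => i /H. Qed.

Lemma sum_mul_eq (I : finType) (k : fieldType) (F : I -> k) j :
  \sum_i F i * (i == j)%:R = F j.
Proof.
by rewrite (sum_supp1 (i0 := j)) ?eqxx ?mulr1 // => i /negbTE ->; rewrite mulr0.
Qed.

Lemma sum_supp2 (I : finType) (k : fieldType) (F : I -> k) i1 i2 : i1 != i2 ->
  (forall i, i != i1 -> i != i2 -> F i = 0) -> \sum_i F i = F i1 + F i2.
Proof.
move=> N H; rewrite (bigD1 i1) //= (bigD1 i2) 1?eq_sym //= big1 ?addr0 //.
by move=> i /andP[]; apply: H.
Qed.

Ltac eq_cases :=
  repeat match goal with |- context[?p == ?q] =>
    is_var p; is_var q; case: (p =P q) => [?|?]; try subst end;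
  try congruence;
  try match goal with H : is_true (?x != ?x) |- _ => by rewrite eqxx in H end.

Section MatrixUnits.
Variables (A : finType) (k : fieldType).
Local Notation W := (W A k).
Local Notation E := (delta k).

Lemma sclE c (x : W) uv : scl c x uv = c * x uv.
Proof. by rewrite ffunE. Qed.

Lemma scl1 (x : W) : scl 1 x = x.
Proof. by apply/ffunP => uv; rewrite sclE mul1r. Qed.

Lemma scl0 (x : W) : scl 0 x = 0.
Proof. by apply/ffunP => uv; rewrite sclE mul0r ffunE. Qed.

Lemma deltaE (a b : A) uv : E a b uv = (uv == (a, b))%:R.
Proof. by rewrite ffunE. Qed.

Lemma sum_pair (F : A * A -> k) : \sum_p F p = \sum_a \sum_c F (a, c).
Proof. by rewrite pair_bigA; apply: eq_bigr; case. Qed.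

Lemma sum_pair_snd (F : A * A -> k) v :
  \sum_p F p * (p.2 == v)%:R = \sum_w F (w, v).
Proof. by rewrite sum_pair; apply: eq_bigr => a _; apply: sum_mul_eq. Qed.

Lemma sum_pair_fst (F : A * A -> k) u :
  \sum_p (p.1 == u)%:R * F p = \sum_w F (u, w).
Proof.
rewrite sum_pair [LHS](sum_supp1 (i0 := u)) => [|a /negbTE Ha].
  by apply: eq_bigr => c _; rewrite eqxx mul1r.
by apply: big1 => c _; rewrite Ha mul0r.
Qed.

Lemma lieE (x y : W) u v :
  lie x y (u, v) = \sum_w y (u, w) * x (w, v) - \sum_w x (u, w) * y (w, v).
Proof.
rewrite /lie sum_ffunE; under eq_bigr do rewrite sum_ffunE.
have termE (ac bd : A * A) :
  (scl (x ac * y bd) (scl (ac.1 == bd.2)%:R (E bd.1 ac.2)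
        - scl (bd.1 == ac.2)%:R (E ac.1 bd.2))) (u, v)
  = x ac * (y bd * (bd == (u, ac.1))%:R) * (ac.2 == v)%:R
    - (x ac * (ac.1 == u)%:R) * (y bd * (bd == (ac.2, v))%:R).
  case: ac bd => [a c] [b d]; rewrite !ffunE /= !xpair_eqE.
  by eq_cases; rewrite /=; ring.
under eq_bigr => ac _ do
  rewrite (eq_bigr _ (fun bd _ => termE ac bd)) sumrB -mulr_suml -!mulr_sumr
          !sum_mul_eq.
rewrite sumrB; congr (_ - _).
  rewrite -(sum_pair_snd (fun p => y (u, p.1) * x p)).
  by apply: eq_bigr => p _; rewrite [x p * _]mulrC.
rewrite -(sum_pair_fst (fun p => x p * y (p.2, v))) /=.
by apply: eq_bigr => p _; rewrite mulrAC mulrC.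
Qed.

Lemma lie_anti (x y : W) : lie x y = - lie y x.
Proof.
apply/ffunP => [[u v]]; rewrite ffunE !lieE opprB.
by congr (_ - _); apply: eq_bigr => w _; exact: mulrC.
Qed.

Lemma lieDl (x1 x2 y : W) : lie (x1 + x2) y = lie x1 y + lie x2 y.
Proof.
apply/ffunP => [[u v]]; rewrite ffunE !lieE.
under eq_bigr do rewrite ffunE mulrDr.
under [X in _ - X]eq_bigr do rewrite ffunE mulrDl.
rewrite !big_split /=; ring.
Qed.

Lemma lieDr (x y1 y2 : W) : lie x (y1 + y2) = lie x y1 + lie x y2.
Proof. by rewrite lie_anti lieDl opprD -!lie_anti. Qed.

Lemma lie_deltal (p q : A) (y : W) u v :
  lie (E p q) y (u, v) = y (u, p) * (v == q)%:R - (u == p)%:R * y (q, v).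
Proof.
rewrite lieE (sum_supp1 (i0 := p)) => [|w Hw]; last first.
  by rewrite deltaE xpair_eqE (negbTE Hw) mulr0.
rewrite (sum_supp1 (i0 := q)) => [|w Hw]; last first.
  by rewrite deltaE xpair_eqE (negbTE Hw) andbF mul0r.
by rewrite !deltaE !xpair_eqE !eqxx /= andbT.
Qed.

Lemma lie_delta_diag (p : A) (y : W) u v :
  lie (E p p) y (u, v) = ((v == p)%:R - (u == p)%:R) * y (u, v).
Proof. by rewrite lie_deltal; eq_cases; rewrite /=; ring. Qed.

Lemma lie_delta (p q r s : A) :
  lie (E p q) (E r s) = scl (s == p)%:R (E r q) - scl (q == r)%:R (E p s).
Proof.
apply/ffunP => [[u v]]; rewrite lie_deltal !ffunE /= !xpair_eqE.
by eq_cases; rewrite /=; ring.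
Qed.

Lemma lie_delta_chain (u v w : A) : u != v -> lie (E w v) (E u w) = E u v.
Proof.
by move=> Nuv; rewrite lie_delta eqxx eq_sym (negbTE Nuv) scl1 scl0 subr0.
Qed.

Lemma lie_delta_chainN (u v w : A) : u != v ->
  scl (-1) (lie (E u w) (E w v)) = E u v.
Proof.
move=> Nuv; rewrite lie_anti lie_delta_chain //.
by apply/ffunP => uv; rewrite !ffunE mulN1r opprK.
Qed.

Lemma span_seq (P : W -> Prop) (l : seq (k * W)) :
  (forall p, p \in l -> P p.2) -> spanW P (\sum_(p <- l) scl p.1 p.2).
Proof.
move=> Hl; exists (undup (map snd l)); split.
  by move=> y; rewrite mem_undup => /mapP [p Hp ->]; exact: Hl.
exists (fun y => \sum_(p <- l | p.2 == y) p.1).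
apply/ffunP => uv; rewrite !sum_ffunE.
transitivity (\sum_(p <- l) \sum_(y <- undup (map snd l))
                 (if p.2 == y then p.1 * p.2 uv else 0)).
  apply: eq_big_seq => p Hp.
  rewrite (bigD1_seq p.2) ?undup_uniq ?mem_undup ?map_f //= eqxx big1 ?addr0 ?sclE //.
  by move=> y /negbTE; rewrite eq_sym => ->.
rewrite exchange_big; apply: eq_bigr => y _.
rewrite sclE (big_mkcond (fun p => p.2 == y)) mulr_suml /=; apply: eq_bigr => p _.
by case: eqP => [->|]; rewrite ?mul0r.
Qed.

Lemma spanW0 (P : W -> Prop) : spanW P 0.
Proof. by exists [::]; split => //; exists (fun _ => 0); rewrite big_nil. Qed.

Lemma spanW_in (P : W -> Prop) x : P x -> spanW P x.
Proof.
move=> Hx; exists [:: x]; split; first by move=> y; rewrite inE => /eqP ->.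
by exists (fun _ => 1); rewrite big_seq1 scl1.
Qed.

Lemma spanWD (P : W -> Prop) x y : spanW P x -> spanW P y -> spanW P (x + y).
Proof.
move=> [r1 [H1 [c1 ->]]] [r2 [H2 [c2 ->]]].
have := @span_seq P ([seq (c1 z, z) | z <- r1] ++ [seq (c2 z, z) | z <- r2]).
rewrite big_cat !big_map /=; apply => p.
by rewrite mem_cat => /orP[] /mapP [z Hz ->] /=; [exact: H1 | exact: H2].
Qed.

Lemma spanWZ (P : W -> Prop) c x : spanW P x -> spanW P (scl c x).
Proof.
move=> [r [Hr [c1 ->]]].
have := @span_seq P [seq (c * c1 z, z) | z <- r]; rewrite big_map /=.
have -> : scl c (\sum_(y <- r) scl (c1 y) y) = \sum_(y <- r) scl (c * c1 y) y.
  apply/ffunP => uv; rewrite sclE !sum_ffunE mulr_sumr; apply: eq_bigr => z _.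
  by rewrite !sclE mulrA.
by apply => p /mapP [z Hz ->] /=; exact: Hr.
Qed.

Lemma spanW_min (P U : W -> Prop) : is_subspace U -> sub_set P U -> sub_set (spanW P) U.
Proof.
move=> [U0 [UD UZ]] HPU x [r [Hr [c ->]]].
elim: r Hr => [|y r IH] Hr; rewrite ?big_nil ?big_cons //; apply: UD.
  by apply/UZ/HPU/Hr; rewrite mem_head.
by apply: IH => z Hz; apply: Hr; rewrite inE Hz orbT.
Qed.

Lemma spanW_sum (P : W -> Prop) (I : finType) (F : I -> W) :
  (forall i, spanW P (F i)) -> spanW P (\sum_i F i).
Proof. by move=> H; apply: big_ind => //; [exact: spanW0 | exact: spanWD]. Qed.

End MatrixUnits.

Section SetNth.
Variable T : eqType.
Implicit Types (p z : seq T).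

Lemma set_nth_dflt x0 x1 p i y :
  (i < size p)%N -> set_nth x0 p i y = set_nth x1 p i y.
Proof. by elim: p i => [|x p IH] [|i] //= Hi; rewrite IH. Qed.

Lemma set_nth_nth x0 p i : (i < size p)%N -> set_nth x0 p i (nth x0 p i) = p.
Proof. by elim: p i => [|x p IH] [|i] //= Hi; rewrite IH. Qed.

Lemma size_set_nth_ltn x0 p i y :
  (i < size p)%N -> size (set_nth x0 p i y) = size p.
Proof. by move=> Hi; rewrite size_set_nth; apply/maxn_idPr. Qed.

Lemma set_nth_cat x0 p1 p2 i y :
  set_nth x0 (p1 ++ p2) i y =
  if (i < size p1)%N then set_nth x0 p1 i y ++ p2
  else p1 ++ set_nth x0 p2 (i - size p1) y.
Proof.
elim: p1 i => [|x p1 IH] [|i] //=; rewrite ?subn0 //.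
by rewrite IH ltnS subSS; case: ifP.
Qed.

Lemma infix_size_eq p z : infix z p -> (size p <= size z)%N -> z = p.
Proof.
case/infixP => [l [r ->]]; rewrite !size_cat.
case: l => [|x l]; case: r => [|y r] /=; rewrite ?cats0 // => H; lia.
Qed.

Lemma set_nth_inj p (a b c d : T) i j :
  (i < size p)%N -> (j < size p)%N -> nth a p i = a -> nth c p j = c ->
  a != b -> c != d -> set_nth a p i b = set_nth c p j d ->
  [/\ i = j, a = c & b = d].
Proof.
move=> Hi Hj Hpi Hpj Nab Ncd E.
rewrite (set_nth_dflt _ c) // in E.
have Ei := congr1 (fun l => nth c l i) E; have Ej := congr1 (fun l => nth c l j) E.
rewrite /= !nth_set_nth /= !eqxx in Ei Ej.
have [Eij|Nij] := eqVneq i j; last first.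
  by rewrite eq_sym (negbTE Nij) Hpj in Ej; rewrite Ej eqxx in Ncd.
subst j; rewrite eqxx in Ei; split => //.
by rewrite -Hpj -Hpi (set_nth_default a).
Qed.

Lemma infix_set_nth x0 p i y y' z :
  (i < size p)%N -> infix z (set_nth x0 p i y) ->
  infix z p \/ exists2 j, (j < size z)%N &
    nth x0 z j = y /\ infix (set_nth x0 z j y') (set_nth x0 p i y').
Proof.
move=> Hi /infixP [p1 [p2 Eq]].
have Ep : p = set_nth x0 (p1 ++ z ++ p2) i (nth x0 p i).
  by rewrite -Eq set_set_nth eqxx set_nth_nth.
have Ep' : set_nth x0 p i y' = set_nth x0 (p1 ++ z ++ p2) i y'.
  by rewrite -Eq set_set_nth eqxx.
have [H1|H1] := ltnP i (size p1).
  by left; rewrite Ep set_nth_cat H1 infix_infix.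
have [H2|H2] := ltnP (i - size p1) (size z); last first.
  by left; rewrite Ep set_nth_cat ltnNge H1 /= set_nth_cat ltnNge H2 /= infix_infix.
right; exists (i - size p1)%N => //; split.
  have := congr1 (fun l => nth x0 l i) Eq.
  by rewrite nth_set_nth /= eqxx nth_cat ltnNge H1 /= nth_cat H2 => ->.
by rewrite Ep' set_nth_cat ltnNge H1 /= set_nth_cat H2 infix_infix.
Qed.

End SetNth.

Section Support.
Variables (V A : finType) (s t : A -> V) (Z : pred (seq A)) (k : fieldType).
Hypotheses (HZ : Z_paths_len_ge2 s t Z) (Hmin : Z_minimal Z).

Local Notation par := (par s t).
Local Notation inB := (inB s t Z).
Local Notation leZ := (leZ s t Z k).
Local Notation repl := (repl_coef s t Z k).

Lemma par_refl a : par a a.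
Proof. by rewrite /par !eqxx. Qed.

Lemma par_sym a b : par a b -> par b a.
Proof. by rewrite /par => /andP[/eqP -> /eqP ->]; rewrite !eqxx. Qed.

Lemma par_trans a b c : par a b -> par b c -> par a c.
Proof. by rewrite /par => /andP[/eqP -> /eqP ->]. Qed.

Lemma path_set_par x0 x p i b : path (fun a c => t a == s c) x p ->
  (i < size p)%N -> par (nth x0 p i) b ->
  path (fun a c => t a == s c) x (set_nth x0 p i b).
Proof.
elim: p x i => [|y p IH] x [|i] //= /andP[Hxy Hp] Hi.
  by case/andP => /eqP <- /eqP Ht; rewrite Hxy; case: p Hp {IH Hi} => //= z p; rewrite Ht.
by move=> Hpar; rewrite Hxy IH.
Qed.

Lemma is_path_set_par x0 p i b :
  is_path s t p -> (i < size p)%N -> par (nth x0 p i) b -> is_path s t (set_nth x0 p i b).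
Proof.
case: p => [|x p] //; case: i => [|i] /=.
  by move=> Hp _ /andP[_ /eqP Ht]; case: p Hp => //= z p; rewrite Ht.
exact: path_set_par.
Qed.

Lemma Z_notin_B p : Z p -> ~ inB p.
Proof. by move=> Zp [_ /(_ p Zp)]; rewrite infix_refl. Qed.

Lemma repl_coef_neq0 p a b q : Z p -> repl p a b q != 0 ->
  [/\ inB q, a != b & exists2 i, (i < size p)%N & nth a p i = a /\ set_nth a p i b = q].
Proof.
move=> Zp; rewrite /repl_coef; case: asboolP => [Bq|_]; last by rewrite eqxx.
set S := [set i : 'I_(size p) | _].
have [->|[i]] := set_0Vmem S; first by rewrite cards0 eqxx.
rewrite inE => /andP[/eqP Hi /eqP Hq] _; split => //; last by exists i.
apply: contra_not_neq (Z_notin_B Zp) => Eab; subst b.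
have Ep : set_nth a p i a = p by rewrite -{2}Hi set_nth_nth.
by rewrite -Ep Hq.
Qed.

Lemma repl_coef_one p a b q i : Z p -> inB q -> (i < size p)%N -> nth a p i = a ->
  a != b -> set_nth a p i b = q -> repl p a b q = 1.
Proof.
move=> Zp Bq Hi Hpi Nab Hq; rewrite /repl_coef asboolT //.
suff -> : [set j : 'I_(size p) | (nth a p j == a) && (set_nth a p j b == q)]
          = [set Ordinal Hi] by rewrite cards1.
apply/setP => j; rewrite !inE; apply/andP/eqP => [[/eqP H1 /eqP H2]|-> /=].
  by apply: val_inj; have [] := set_nth_inj (ltn_ord j) Hi H1 Hpi Nab Nab (etrans H2 (esym Hq)).
by rewrite Hpi Hq.
Qed.

Lemma leZ_refl a : leZ a a.
Proof.
move=> p q Zp; apply/eqP/negPn/negP => /(repl_coef_neq0 Zp) [_].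
by rewrite eqxx.
Qed.

Lemma leZ_set_nth_notin_B a b p i : leZ a b -> Z p -> (i < size p)%N ->
  nth b p i = b -> b != a -> ~ inB (set_nth b p i a).
Proof.
move=> Lab Zp Hi Hpi Nba Bq; have := Lab p (set_nth b p i a) Zp.
by rewrite (repl_coef_one Zp Bq Hi Hpi Nba erefl) => /eqP; rewrite oner_eq0.
Qed.

Definition adm u v := par u v /\ leZ v u.

Lemma adm_refl u : adm u u.
Proof. by split; [exact: par_refl | exact: leZ_refl]. Qed.

Lemma K0_supportP (x : W A k) :
  K0 s t Z x <-> forall u v, x (u, v) != 0 -> adm u v.
Proof.
split=> [[Hpar Hpsi] u v Hx|H].
  split; first by apply: contraNT Hx => /Hpar ->.
  move=> p q Zp; apply/eqP; apply: contraT => Hr.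
  have := Hpsi p q Zp; rewrite /psi1_coef (bigD1 (u, v)) //= big1 ?addr0.
    by move/eqP; rewrite mulf_eq0 (negbTE Hx) (negbTE Hr).
  move=> [c d] /= Hne; have [->|Hr'] := eqVneq (repl p c d q) 0; first by rewrite mulr0.
  have [_ Nuv [i Hi [Hpi Hq]]] := repl_coef_neq0 Zp Hr.
  have [_ Ncd [j Hj [Hpj Hq']]] := repl_coef_neq0 Zp Hr'.
  have [_ Ecu Edv] := set_nth_inj Hj Hi Hpj Hpi Ncd Nuv (etrans Hq' (esym Hq)).
  by subst c d; rewrite eqxx in Hne.
split=> [a b Hnp|p q Zp]; first by apply/eqP; apply: contraT => /H [Hp _]; rewrite Hp in Hnp.
apply: big1 => [[a b]] _ /=.
have [->|/H [_ ->]] := eqVneq (x (a, b)) 0; by rewrite ?mul0r ?mulr0.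
Qed.

(* If [p] in [Z] has an arrow [c] whose replacement by [a] lands in B, replace it
   by [b] instead: the result leaves B, so it contains some [z] in [Z]; by
   minimality [z] covers the replaced arrow, and putting [a] back in [z] gives a
   path of B, contradicting [a <= b]. *)
Lemma leZ_trans a b c : par a b -> par b c -> leZ a b -> leZ b c -> leZ a c.
Proof.
move=> Pab Pbc Lab Lbc p q Zp.
apply/eqP/negPn/negP => /(repl_coef_neq0 Zp) [Bq Nca [i Hi [Hpi Hq]]].
have [Ebc|Nbc] := eqVneq b c.
  by subst b; apply: leZ_set_nth_notin_B Lab Zp Hi Hpi Nca _; rewrite Hq.
have [Eab|Nab] := eqVneq a b.
  by subst a; apply: leZ_set_nth_notin_B Lbc Zp Hi Hpi Nca _; rewrite Hq.
set q' := set_nth c p i b.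
have NBq' : ~ inB q' by apply: leZ_set_nth_notin_B Lbc Zp Hi Hpi _; rewrite eq_sym.
have [z Zz Iz] : exists2 z, Z z & infix z q'.
  apply: contra_notP NBq' => Nz; split => [|z Zz].
    by apply: is_path_set_par (HZ Zp).1 Hi _; rewrite Hpi; apply: par_sym.
  by apply/negP => Iz; apply: Nz; exists z.
have [Izp|[j Hj [Hzj Iz']]] := infix_set_nth a Hi Iz.
  have Ezp := Hmin Zp Zz Izp; subst z.
  have Epq : p = q' by apply: infix_size_eq Iz _; rewrite size_set_nth_ltn.
  have := congr1 (fun l => nth c l i) Epq; rewrite nth_set_nth /= eqxx Hpi.
  by move/eqP; rewrite eq_sym (negbTE Nbc).
have Hzj' : nth b z j = b by rewrite (set_nth_default c).
have Nba : b != a by rewrite eq_sym.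
apply: (leZ_set_nth_notin_B Lab Zz Hj Hzj' Nba); rewrite (set_nth_dflt _ c) //; split.
  by apply: is_path_set_par (HZ Zz).1 Hj _; rewrite Hzj; apply: par_sym.
move=> y Zy; apply/negP => Iy; have := Bq.2 y Zy.
by rewrite (infix_trans Iy) // -Hq (set_nth_dflt _ c).
Qed.

Lemma adm_trans u v w : adm u v -> adm v w -> adm u w.
Proof.
move=> [Puv Lvu] [Pvw Lwv]; split; first exact: par_trans Pvw.
by apply: leZ_trans Lwv Lvu; apply: par_sym.
Qed.

End Support.

Section Radical.
Variables (V A : finType) (s t : A -> V) (Z : pred (seq A)) (k : fieldType).
Hypotheses (HZ : Z_paths_len_ge2 s t Z) (Hmin : Z_minimal Z).

Local Notation W := (W A k).
Local Notation E := (delta k).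
Local Notation par := (par s t).
Local Notation adm := (adm s t Z k).
Local Notation K := (K0 s t Z (k := k)).
Local Notation D0 := (D0 s t (k := k)).
Local Notation adm_trans := (adm_trans HZ Hmin).

Definition sim u v := adm u v /\ adm v u.

Lemma sim_refl u : sim u u.
Proof. by split; apply: adm_refl. Qed.

Lemma sim_sym u v : sim u v -> sim v u.
Proof. by case. Qed.

Lemma sim_trans u v w : sim u v -> sim v w -> sim u w.
Proof.
by move=> [Huv Hvu] [Hvw Hwv]; split; [apply: adm_trans Hvw | apply: adm_trans Hvu].
Qed.

Lemma adm_of_K0 (x : W) u v : K x -> x (u, v) != 0 -> adm u v.
Proof. by move=> /K0_supportP; apply. Qed.

Lemma K0_delta u v : adm u v -> K (E u v).
Proof.
move=> H; apply/K0_supportP => a b; rewrite deltaE.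
by case: ((a, b) =P (u, v)) => [[-> ->] //|_]; rewrite eqxx.
Qed.

Lemma K0_subspace : is_subspace K.
Proof.
split; first by apply/K0_supportP => u v; rewrite ffunE eqxx.
split=> [x y Kx Ky|c x Kx]; apply/K0_supportP => u v; rewrite ffunE.
  have [->|/(adm_of_K0 Kx) //] := eqVneq (x (u, v)) 0.
  by rewrite add0r; apply: adm_of_K0.
by rewrite mulf_eq0 negb_or => /andP[_]; apply: adm_of_K0.
Qed.

Lemma K0_entry_mul_out (x y : W) u v w : K x -> K y -> adm v u -> ~ sim u w ->
  y (u, w) * x (w, v) = 0.
Proof.
move=> Kx Ky Hvu Nuw; apply: mul_eq0_by_contra => H1 H2; apply: Nuw.
by split; [exact: adm_of_K0 Ky H1 | apply: adm_trans (adm_of_K0 Kx H2) Hvu].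
Qed.

Lemma lie_K0 (x y : W) : K x -> K y -> K (lie x y).
Proof.
move=> Kx Ky; apply/K0_supportP => u v; apply: contra_neqP => Nuv.
rewrite lieE !big1 ?subr0 // => w _; apply: mul_eq0_by_contra => H1 H2; apply: Nuv.
  exact: adm_trans (adm_of_K0 Kx H1) (adm_of_K0 Ky H2).
exact: adm_trans (adm_of_K0 Ky H1) (adm_of_K0 Kx H2).
Qed.

(* The blocks of k(Q1//Q1) /\ Ker psi_1 are the gl_n of the ~-classes; apart from
   gl_1, the only solvable one is gl_2 in characteristic 2. *)
Definition solvable_block a := 2 \in [pchar k] /\
  exists2 a', a' != a & sim a a' /\ (forall b, sim a b -> b = a \/ b = a').

Lemma solvable_block_sim a b : solvable_block a -> sim a b -> solvable_block b.
Proof.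
move=> [H2 [a' Na [Caa' Hcl]]] Cab; split => //.
case: (Hcl b Cab) => Eb; subst b; first by exists a'.
exists a; first by rewrite eq_sym.
split=> [|c Cc]; first exact: sim_sym.
by case: (Hcl c (sim_trans Caa' Cc)) => ->; [right | left].
Qed.

Lemma nonsolvable_block_sim a b : ~ solvable_block a -> sim a b -> ~ solvable_block b.
Proof. by move=> Na Cab Hb; apply/Na/(solvable_block_sim Hb)/sim_sym. Qed.

Lemma solvable_block_two a b : solvable_block a -> sim a b -> a != b ->
  forall c, sim a c -> c = a \/ c = b.
Proof.
move=> [_ [a' Na [Caa' Hcl]]] Cab Nab c Cac.
by case: (Hcl b Cab) => Eb; [rewrite Eb eqxx in Nab | subst a'; apply: Hcl].
Qed.

Lemma nonsolvable_block_third a b : ~ solvable_block a -> sim a b -> a != b ->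
  (2%:R : k) != 0 \/ exists c, [/\ sim a c, c != a & c != b].
Proof.
move=> Na Cab Nab.
case: (pselect (2 \in [pchar k])) => H2; last by left; apply: contra_notN H2 => H; rewrite inE.
right; apply: contra_notP Na => Nc; split => //; exists b; first by rewrite eq_sym.
split=> // c Cac; have [->|Nca] := eqVneq c a; first by left.
have [->|Ncb] := eqVneq c b; first by right.
by case: Nc; exists c.
Qed.

Definition rad_set (x : W) : Prop := K x /\
  forall a b, sim a b -> a != b -> ~ solvable_block a ->
    x (a, b) = 0 /\ x (a, a) = x (b, b).

Lemma rad_set_subspace : is_subspace rad_set.
Proof.
have [K0 [KD KZ]] := K0_subspace.
split; first by split => // a b _ _ _; rewrite !ffunE.
split=> [x y [Kx Hx] [Ky Hy]|c x [Kx Hx]]; split; [exact: KD| |exact: KZ|].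
  move=> a b Cab Nab Na; have [H1 H2] := Hx a b Cab Nab Na; have [H3 H4] := Hy a b Cab Nab Na.
  by rewrite !ffunE H1 H2 H3 H4 addr0.
move=> a b Cab Nab Na; have [H1 H2] := Hx a b Cab Nab Na.
by rewrite !ffunE H1 H2 mulr0.
Qed.

Lemma lie_rad_set_entry (x y : W) a b : K x -> rad_set y -> sim a b ->
  ~ solvable_block a -> lie x y (a, b) = x (a, b) * (y (a, a) - y (b, b)).
Proof.
move=> Kx [Ky Hy] Cab Na; rewrite lieE (sum_supp1 (i0 := a)) => [|w Nwa]; last first.
  apply: mul_eq0_by_contra => H1 H2.
  have Caw : sim a w by split; [exact: adm_of_K0 Ky H1 | apply: adm_trans (adm_of_K0 Kx H2) Cab.2].
  by move/eqP: H1; rewrite (Hy a w Caw _ Na).1 // eq_sym.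
rewrite (sum_supp1 (i0 := b)) => [|w Nwb]; last first.
  apply: mul_eq0_by_contra => H1 H2.
  have Cwb : sim w b by split; [exact: adm_of_K0 Ky H2 | apply: adm_trans Cab.2 (adm_of_K0 Kx H1)].
  have Nw := nonsolvable_block_sim Na (sim_trans Cab (sim_sym Cwb)).
  by move/eqP: H2; rewrite (Hy w b Cwb Nwb Nw).1.
ring.
Qed.

Lemma lie_rad_set (x y : W) : K x -> rad_set y -> rad_set (lie x y).
Proof.
move=> Kx Ry; split=> [|a b Cab Nab Na]; first exact: lie_K0 Kx Ry.1.
have Nb := nonsolvable_block_sim Na Cab.
rewrite !lie_rad_set_entry //; try exact: sim_refl.
by rewrite (Ry.2 a b Cab Nab Na).2 !subrr !mulr0.
Qed.

Definition par_scalar (d : W) : Prop := (forall u v, u != v -> d (u, v) = 0) /\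
  (forall u v, par u v -> d (u, u) = d (v, v)).

Lemma par_scalar_subspace : is_subspace par_scalar.
Proof.
split; first by split => *; rewrite !ffunE.
split=> [x y [H1 H2] [H3 H4]|c x [H1 H2]]; split => u v H; rewrite !ffunE.
- by rewrite H1 ?H3 ?addr0.
- by rewrite (H2 u v H) (H4 u v H).
- by rewrite H1 ?mulr0.
- by rewrite (H2 u v H).
Qed.

Lemma D0_par_scalar : sub_set D0 par_scalar.
Proof.
apply: spanW_min par_scalar_subspace _ => y [e ->].
split=> u v H; rewrite !ffunE /=; first by rewrite (negbTE H).
by move: H; rewrite /par !eqxx => /andP[/eqP -> /eqP ->].
Qed.

Lemma par_scalar_rad_set d : par_scalar d -> rad_set d.
Proof.
move=> [H1 H2]; split=> [|a b Cab Nab _]; last by split; [exact: H1 | apply: H2; case: Cab => [[]]].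
apply/K0_supportP => u v; have [->|Nuv] := eqVneq u v; first by move=> _; apply: adm_refl.
by rewrite H1 // eqxx.
Qed.

Lemma lie_par_scalar (x d : W) : K x -> par_scalar d -> lie d x = 0.
Proof.
move=> Kx [H1 H2]; apply/ffunP => [[u v]]; rewrite lieE ffunE.
rewrite (sum_supp1 (i0 := v)) => [|w N]; last by rewrite H1 ?mulr0.
rewrite (sum_supp1 (i0 := u)) => [|w N]; last by rewrite H1 ?mul0r // eq_sym.
have [->|/(adm_of_K0 Kx) [P _]] := eqVneq (x (u, v)) 0; first by rewrite mulr0 mul0r subrr.
by rewrite (H2 u v P) mulrC subrr.
Qed.

Lemma rad_set_ideal : L0_ideal s t Z rad_set.
Proof.
split; [exact: rad_set_subspace | | by move=> x [] | exact: lie_rad_set].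
by move=> x /D0_par_scalar /par_scalar_rad_set.
Qed.

Lemma ideal_delta_target (I : W -> Prop) u v w : L0_ideal s t Z I ->
  I (E u v) -> adm v w -> u != w -> I (E u w).
Proof.
move=> [_ _ _ Ilie] Iuv Hvw Nuw; rewrite -(lie_delta_chain k v Nuw).
exact: Ilie (K0_delta Hvw) Iuv.
Qed.

Lemma ideal_delta_source (I : W -> Prop) u v w : L0_ideal s t Z I ->
  I (E u v) -> adm w u -> w != v -> I (E w v).
Proof.
move=> [[_ [_ IZ]] _ _ Ilie] Iuv Hwu Nwv; rewrite -(lie_delta_chainN k u Nwv).
by apply: IZ; apply: Ilie Iuv; apply: K0_delta.
Qed.

(* Conjugating by diagonal matrix units isolates the entries of [z] on [{a, b}];
   one more bracket then yields a matrix unit, dividing by 2 or using a third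
   element of the class. *)
Lemma ideal_block_unit (I : W -> Prop) z a b : L0_ideal s t Z I -> I z ->
  sim a b -> a != b -> ~ solvable_block a -> z (a, b) != 0 ->
  exists c d, [/\ sim c d, c != d, ~ solvable_block c & I (E c d)].
Proof.
move=> HI Iz Cab Nab Na Hz; have [[_ [ID IZ]] _ _ Ilie] := HI.
set y := lie (E b b) (lie (E a a) z).
have Ka u : K (E u u) by apply/K0_delta/adm_refl.
have Iy : I y by apply: Ilie (Ka b) (Ilie _ _ (Ka a) Iz).
have yE u v : y (u, v) =
    ((v == b)%:R - (u == b)%:R) * (((v == a)%:R - (u == a)%:R) * z (u, v)).
  by rewrite /y !lie_delta_diag.
case: (nonsolvable_block_third Na Cab Nab) => [H2 | [c [Cac Nca Ncb]]].
  exists a, b; split => //.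
  have -> : E a b = scl (- (2%:R * z (a, b))^-1) y
                    + scl ((2%:R * z (a, b))^-1) (lie (E a a) y).
    apply/ffunP => [[u v]]; rewrite !ffunE /= lie_delta_diag !yE !xpair_eqE.
    eq_cases; rewrite /=; try ring.
    by field; rewrite Hz H2.
  by apply: ID; apply: IZ => //; apply: Ilie (Ka a) Iy.
exists c, b; split => //; first exact: sim_trans (sim_sym Cac) Cab.
  exact: nonsolvable_block_sim Na Cac.
have -> : E c b = scl (z (a, b))^-1 (lie (E c a) y).
  apply/ffunP => [[u v]]; rewrite !ffunE /= lie_deltal !yE !xpair_eqE.
  by eq_cases; rewrite /=; try ring; field.
by apply: IZ; apply: Ilie (K0_delta Cac.2) Iy.
Qed.

Lemma der_perfect (I P : W -> Prop) : sub_set P I ->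
  (forall x, P x -> exists c y z, [/\ P y, P z & x = scl c (lie y z)]) ->
  forall n, sub_set P (derL0 s t I n).
Proof.
move=> PI Hperf; elim=> [|n IH] x Px; first exact: PI.
have [c [y [z [Py Pz ->]]]] := Hperf x Px.
exists (scl c (lie y z)), 0; split; last split; last by rewrite addr0.
  by apply/spanWZ/spanW_in; exists y, z; split; [|split]; try apply: IH.
exact: spanW0.
Qed.

(* [E c d], [E d c] and their bracket span a perfect copy of sl_2. *)
Lemma block_unit_der_sl2 (I : W -> Prop) c d : L0_ideal s t Z I -> I (E c d) ->
  sim c d -> c != d -> (2%:R : k) != 0 -> forall n, derL0 s t I n (E c d).
Proof.
move=> HI Icd Ccd Ncd H2; have [[_ [_ IZ]] _ _ Ilie] := HI.
set h := lie (E d c) (E c d).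
have hE u v : h (u, v) = (u == c)%:R * (v == c)%:R - (u == d)%:R * (v == d)%:R.
  by rewrite /h lie_deltal !deltaE !xpair_eqE; eq_cases; rewrite /=; ring.
have Ecd : E c d = scl (2%:R)^-1 (lie (E c d) h).
  apply/ffunP => [[u v]]; rewrite !ffunE /= lie_deltal !hE !xpair_eqE.
  by eq_cases; rewrite /=; try ring; field.
have Edc : E d c = scl (- (2%:R)^-1) (lie (E d c) h).
  apply/ffunP => [[u v]]; rewrite !ffunE /= lie_deltal !hE !xpair_eqE.
  by eq_cases; rewrite /=; try ring; field.
have Ih : I h by apply: Ilie (K0_delta Ccd.2) Icd.
have Idc : I (E d c) by rewrite Edc; apply: IZ; apply: Ilie (K0_delta Ccd.2) Ih.
move=> n; apply: (@der_perfect I (fun x => [\/ x = E c d, x = E d c | x = h])); last exact: Or31.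
  by move=> x [] ->.
move=> x [] ->; [exists (2%:R)^-1, (E c d), h | exists (- (2%:R)^-1), (E d c), h
                | exists 1, (E d c), (E c d)]; split; rewrite ?scl1;
  by [apply: Or31 | apply: Or32 | apply: Or33 | exact: Ecd | exact: Edc | rewrite /h].
Qed.

(* The matrix units of a class with three elements span a perfect copy of sl_3. *)
Lemma block_unit_der_sl3 (I : W -> Prop) c d e : L0_ideal s t Z I -> I (E c d) ->
  sim c d -> sim c e -> [/\ c != d, c != e & d != e] ->
  forall n, derL0 s t I n (E c d).
Proof.
move=> HI Icd Ccd Cce Ncde n.
pose P x := exists u v w, [/\ sim u v /\ sim u w, [/\ u != v, u != w & v != w],
                               I (E u v) & x = E u v].
apply: (@der_perfect I P); last by exists c, d, e.
  by move=> _ [u [v [w [_ _ Iuv ->]]]].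
move=> _ [u [v [w [[Cuv Cuw] [Nuv Nuw Nvw] Iuv ->]]]].
exists 1, (E w v), (E u w); rewrite scl1 lie_delta_chain //; split => //.
- exists w, v, u; split => //.
  + by split; [apply: sim_trans (sim_sym Cuw) Cuv | apply: sim_sym].
  + by split; rewrite // eq_sym.
  + by apply: ideal_delta_source HI Iuv Cuw.2 _; rewrite eq_sym.
- exists u, w, v; split => //; first by split; rewrite // eq_sym.
  exact: ideal_delta_target HI Iuv (sim_trans (sim_sym Cuv) Cuw).1 Nuw.
Qed.

Lemma block_unit_not_solvable (I : W -> Prop) c d : L0_ideal s t Z I ->
  L0_solvable s t I -> sim c d -> c != d -> ~ solvable_block c -> ~ I (E c d).
Proof.
move=> HI [n Hn] Ccd Ncd Nc Icd.
suff /Hn /D0_par_scalar [Hoff _] : derL0 s t I n (E c d).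
  by move/eqP: (Hoff c d Ncd); rewrite deltaE eqxx oner_eq0.
case: (nonsolvable_block_third Nc Ccd Ncd) => [H2 | [e [Cce Nec Ned]]].
  exact: block_unit_der_sl2.
by apply: (block_unit_der_sl3 HI Icd Ccd Cce); split; rewrite // eq_sym.
Qed.

Lemma solvable_ideal_sub_rad_set (I : W -> Prop) :
  L0_ideal s t Z I -> L0_solvable s t I -> sub_set I rad_set.
Proof.
move=> HI HS x Ix; have [_ _ IK Ilie] := HI.
have off0 z a b : I z -> sim a b -> a != b -> ~ solvable_block a -> z (a, b) = 0.
  move=> Iz Cab Nab Na; apply/eqP/negPn/negP => Hz.
  have [c [d [Ccd Ncd Nc Icd]]] := ideal_block_unit HI Iz Cab Nab Na Hz.
  exact: block_unit_not_solvable HI HS Ccd Ncd Nc Icd.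
split=> [|a b Cab Nab Na]; first exact: IK.
split; first exact: off0.
have := off0 _ a b (Ilie _ _ (K0_delta Cab.1) Ix) Cab Nab Na.
by rewrite lie_deltal !eqxx mulr1 mul1r => /eqP; rewrite subr_eq0 => /eqP.
Qed.

Definition rad_der1 (x : W) : Prop := K x /\
  forall u v, sim u v -> (~ solvable_block u -> x (u, v) = 0) /\ x (u, u) = x (v, v).

Definition rad_der2 (x : W) : Prop := K x /\
  forall u v, sim u v -> [/\ u != v -> x (u, v) = 0, ~ solvable_block u -> x (u, u) = 0
                           & x (u, u) = x (v, v)].

Definition upcard u := #|[set c | `[< adm u c >]]|.

Definition lowers_by m (x : W) : Prop := K x /\
  forall u v, x (u, v) != 0 -> (upcard v + m <= upcard u)%N.

Lemma upcard_lt u v : adm u v -> ~ adm v u -> (upcard v < upcard u)%N.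
Proof.
move=> Huv Nvu; apply/proper_card/properP; split.
  by apply/subsetP => c; rewrite !inE => /asboolP Hvc; apply/asboolP; apply: adm_trans Hvc.
by exists u; rewrite !inE; [apply/asboolP/adm_refl | apply/asboolP].
Qed.

Lemma rad_der1_subspace : is_subspace rad_der1.
Proof.
have [K0 [KD KZ]] := K0_subspace.
split; first by split => // u v _; rewrite !ffunE.
split=> [x y [Kx Hx] [Ky Hy]|c x [Kx Hx]]; split; [exact: KD| |exact: KZ|];
  move=> u v Cuv; have [H1 H2] := Hx u v Cuv.
  have [H3 H4] := Hy u v Cuv.
  by rewrite !ffunE H2 H4; split => // Nu; rewrite H1 ?H3 ?addr0.
by rewrite !ffunE H2; split => // Nu; rewrite H1 ?mulr0.
Qed.

Lemma rad_der2_subspace : is_subspace rad_der2.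
Proof.
have [K0 [KD KZ]] := K0_subspace.
split; first by split => // u v _; rewrite !ffunE.
split=> [x y [Kx Hx] [Ky Hy]|c x [Kx Hx]]; split; [exact: KD| |exact: KZ|];
  move=> u v Cuv; have [H1 H2 H3] := Hx u v Cuv.
  have [H4 H5 H6] := Hy u v Cuv.
  by split=> [N|N|]; rewrite !ffunE;
    [rewrite H1 ?H4 ?addr0 | rewrite H2 ?H5 ?addr0 | rewrite H3 H6].
by split=> [N|N|]; rewrite !ffunE; [rewrite H1 ?mulr0 | rewrite H2 ?mulr0 | rewrite H3].
Qed.

Lemma lowers_by_subspace m : is_subspace (lowers_by m).
Proof.
have [K0 [KD KZ]] := K0_subspace.
split; first by split => // u v; rewrite !ffunE eqxx.
split=> [x y [Kx Hx] [Ky Hy]|c x [Kx Hx]]; split; [exact: KD| |exact: KZ|] => u v.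
  rewrite ffunE; have [->|/Hx //] := eqVneq (x (u, v)) 0.
  by rewrite add0r; apply: Hy.
by rewrite ffunE mulf_eq0 negb_or => /andP[_ /Hx].
Qed.

Lemma sum_solvable_block (x y : W) u v a b : K x -> K y -> solvable_block u ->
  sim u v -> u != v -> sim u a -> sim u b ->
  \sum_w x (a, w) * y (w, b) = x (a, u) * y (u, b) + x (a, v) * y (v, b).
Proof.
move=> Kx Ky Hu Cuv Nuv Cua Cub; rewrite (sum_supp2 Nuv) => // w Nwu Nwv.
apply: K0_entry_mul_out Ky Kx (sim_trans (sim_sym Cub) Cua).1 _ => Caw.
by case: (solvable_block_two Hu Cuv Nuv (sim_trans Cua Caw)) => Ew; move: Nwu Nwv; rewrite Ew eqxx.
Qed.

(* On a block {u, v} of size 2 the two diagonal entries of a bracket differ by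
   twice the same quantity, which vanishes in characteristic 2. *)
Lemma lie_solvable_block_diag (x y : W) u v : K x -> K y -> solvable_block u ->
  sim u v -> lie x y (u, u) = lie x y (v, v).
Proof.
move=> Kx Ky Hu Cuv; have [->//|Nuv] := eqVneq u v.
have Cu := sim_refl u.
rewrite !lieE !(sum_solvable_block Kx Ky Hu Cuv Nuv) ?(sum_solvable_block Ky Kx Hu Cuv Nuv) //.
apply/eqP; rewrite -subr_eq0.
set X := y (u, v) * x (v, u) - x (u, v) * y (v, u).
have -> : y (u, u) * x (u, u) + y (u, v) * x (v, u) - (x (u, u) * y (u, u) + x (u, v) * y (v, u))
  - (y (v, u) * x (u, v) + y (v, v) * x (v, v) - (x (v, u) * y (u, v) + x (v, v) * y (v, v)))
  = X + X by rewrite /X; ring.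
by rewrite addrr_pchar2 //; case: Hu.
Qed.

Lemma lie_rad_set_der1 (x y : W) : rad_set x -> rad_set y -> rad_der1 (lie x y).
Proof.
move=> Rx Ry; split=> [|u v Cuv]; first exact: lie_K0 Rx.1 Ry.1.
case: (pselect (solvable_block u)) => [Hu|Nu].
  by split=> //; apply: lie_solvable_block_diag Rx.1 Ry.1 Hu Cuv.
have [Cu Cv] := (sim_refl u, sim_refl v); have Nv := nonsolvable_block_sim Nu Cuv.
rewrite !(lie_rad_set_entry Rx.1 Ry) // !subrr !mulr0; split=> // _.
by have [->|Nuv] := eqVneq u v; rewrite ?subrr ?mulr0 // (Ry.2 u v Cuv Nuv Nu).2 subrr mulr0.
Qed.

Lemma lie_rad_der1_nonsolvable (x y : W) u v : rad_der1 x -> rad_der1 y -> sim u v ->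
  ~ solvable_block u -> lie x y (u, v) = 0.
Proof.
move=> [Kx Hx] [Ky Hy] Cuv Nu; rewrite lieE !big1 ?subr0 // => w _.
  case: (pselect (sim u w)) => [Cuw|Nuw]; first by rewrite ((Hx u w Cuw).1 Nu) mul0r.
  exact: K0_entry_mul_out Ky Kx Cuv.2 Nuw.
case: (pselect (sim u w)) => [Cuw|Nuw]; first by rewrite ((Hy u w Cuw).1 Nu) mul0r.
exact: K0_entry_mul_out Kx Ky Cuv.2 Nuw.
Qed.

Lemma lie_rad_der1 (x y : W) : rad_der1 x -> rad_der1 y -> rad_der2 (lie x y).
Proof.
move=> Hx1 Hy1; have [Kx Hx] := Hx1; have [Ky Hy] := Hy1.
split=> [|u v Cuv]; first exact: lie_K0.
have Cu := sim_refl u.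
case: (pselect (solvable_block u)) => [Hu|Nu]; last first.
  have Nv := nonsolvable_block_sim Nu Cuv.
  have Cv := sim_refl v.
  by split=> [_|_|]; rewrite ?(lie_rad_der1_nonsolvable Hx1 Hy1).
split=> // [Nuv|]; last exact: lie_solvable_block_diag Kx Ky Hu Cuv.
rewrite lieE (sum_solvable_block Ky Kx Hu Cuv Nuv) ?(sum_solvable_block Kx Ky Hu Cuv Nuv) //.
by rewrite (Hx u v Cuv).2 (Hy u v Cuv).2; ring.
Qed.

Lemma lie_rad_der2 (x y : W) : rad_der2 x -> rad_der2 y -> lowers_by 1 (lie x y).
Proof.
move=> [Kx Hx] [Ky Hy]; split=> [|u v Hne]; first exact: lie_K0.
have Huv := adm_of_K0 (lie_K0 Kx Ky) Hne.
case: (pselect (adm v u)) => [Hvu|Nvu]; last by rewrite addn1; apply: upcard_lt.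
have Cuv : sim u v by [].
move: Hne; rewrite lieE (sum_supp1 (i0 := v)) => [|w Nwv]; last first.
  case: (pselect (sim u w)) => [Cuw|Nuw]; last exact: K0_entry_mul_out Kx Ky Hvu Nuw.
  by have [->] := Hx w v (sim_trans (sim_sym Cuw) Cuv); rewrite ?mulr0.
rewrite (sum_supp1 (i0 := u)) => [|w Nwu]; last first.
  case: (pselect (sim u w)) => [Cuw|Nuw]; last exact: K0_entry_mul_out Ky Kx Hvu Nuw.
  by have [->] := Hx u w Cuw; rewrite ?mul0r // eq_sym.
by have [_ _ ->] := Hx u v Cuv; rewrite mulrC subrr eqxx.
Qed.

Lemma lie_lowers_by m n (x y : W) :
  lowers_by m x -> lowers_by n y -> lowers_by (m + n) (lie x y).
Proof.
move=> [Kx Hx] [Ky Hy]; split=> [|u v]; first exact: lie_K0.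
rewrite lieE; apply: contraNT => Hlt; rewrite !big1 ?subr0 // => w _.
  apply: mul_eq0_by_contra => /Hx Hxw /Hy Hyw; move: Hlt; rewrite -ltnNge; lia.
apply: mul_eq0_by_contra => /Hy Hyw /Hx Hxw; move: Hlt; rewrite -ltnNge; lia.
Qed.

Lemma lowers_by_card (x : W) : lowers_by #|A|.+1 x -> x = 0.
Proof.
move=> [_ Hx]; apply/ffunP => [[u v]]; rewrite ffunE.
apply/eqP; apply: contraT => /Hx; have := max_card (mem [set c | `[< adm u c >]]).
rewrite -/(upcard u); lia.
Qed.

Definition rad_der n : W -> Prop :=
  match n with 0 => rad_set | 1 => rad_der1 | 2 => rad_der2 | n'.+3 => lowers_by n'.+1 end.

Lemma rad_der_K0 n x : rad_der n x -> K x.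
Proof. by case: n => [[]|[[]|[[]|n []]]]. Qed.

Lemma rad_der_subspace n : is_subspace (rad_der n).
Proof.
case: n => [|[|[|n]]] /=; [exact: rad_set_subspace | exact: rad_der1_subspace |
                            exact: rad_der2_subspace | exact: lowers_by_subspace].
Qed.

Lemma rad_der_lie n x y : rad_der n x -> rad_der n y -> rad_der n.+1 (lie x y).
Proof.
case: n => [|[|[|n]]] /=; [exact: lie_rad_set_der1 | exact: lie_rad_der1 | exact: lie_rad_der2 |].
move=> Lx Ly; have [Kz Hz] := lie_lowers_by Lx Ly.
by split=> // u v /Hz; lia.
Qed.

(* The elements of D0 are central in k(Q1//Q1) /\ Ker psi_1, so derived terms
   taken modulo D0 are brackets of the representatives. *)
Lemma derL0_rad_der n x : derL0 s t rad_set n x -> addS (rad_der n) D0 x.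
Proof.
elim: n x => [|n IH] x /=; first by exists x, 0; split; [|split; [exact: spanW0 | rewrite addr0]].
move=> [b [d [Hb [Hd ->]]]]; exists b, d; split => //.
apply: spanW_min (rad_der_subspace n.+1) _ _ Hb => _ [x1 [y1 [/IH Hx1 [/IH Hy1 ->]]]].
have [h1 [d1 [L1 [/D0_par_scalar D1 ->]]]] := Hx1.
have [h2 [d2 [L2 [/D0_par_scalar D2 ->]]]] := Hy1.
have [K1 K2] := (rad_der_K0 L1, rad_der_K0 L2).
rewrite lieDl !lieDr (lie_par_scalar K2 D1) (lie_par_scalar (par_scalar_rad_set D2).1 D1).
rewrite (lie_anti h1 d2) (lie_par_scalar K1 D2) oppr0 !addr0.
exact: rad_der_lie.
Qed.

Lemma rad_set_solvable : L0_solvable s t rad_set.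
Proof.
exists #|A|.+3 => x /derL0_rad_der [h [d [Lh [Dd ->]]]].
by rewrite (lowers_by_card Lh) add0r.
Qed.

Lemma simP a b : sim a b <-> par a b /\ approxZ s t Z k a b.
Proof.
split=> [[[Pab Lba] [_ Lab]]|[Pab [Lab Lba]]]; first by do 2?split.
by do 2!split=> //; apply: par_sym.
Qed.

Lemma inL0P a b : inL0 s t Z k a b <-> adm a b.
Proof.
split=> [[_ Kab]|Hab]; last by split; [exact: Hab.1 | exact: K0_delta].
by apply: adm_of_K0 Kab _; rewrite deltaE eqxx oner_eq0.
Qed.

Definition block_identity (a : A) : W := [ffun bc : A * A =>
  if `[< bc.1 = bc.2 /\ par a bc.1 /\ approxZ s t Z k a bc.1 >] then 1 else 0].

Lemma block_identityE a u v :
  block_identity a (u, v) = if (u == v) && `[< sim a u >] then 1 else 0.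
Proof.
rewrite ffunE /=; have [<-|Nuv] /= := eqVneq u v; last first.
  by case: asboolP => // [[Euv _]]; rewrite Euv eqxx in Nuv.
by congr (if _ then _ else _); apply/asboolP/asboolP => [[_ /simP]|/simP].
Qed.

Lemma block_identity_rad_set a : rad_set (block_identity a).
Proof.
split=> [|u v Cuv Nuv _].
  apply/K0_supportP => u v; rewrite block_identityE.
  have [<- _|Nuv] := eqVneq u v; first exact: adm_refl.
  by rewrite /= eqxx.
rewrite !block_identityE (negbTE Nuv) !eqxx; split => //=.
by congr (if _ then _ else _); apply/asboolP/asboolP => Cau;
  [apply: sim_trans Cau Cuv | apply: sim_trans Cau (sim_sym Cuv)].
Qed.

Lemma delta_rad_set_strict u v : adm u v -> ~ adm v u -> rad_set (E u v).
Proof.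
move=> Huv Nvu; split=> [|a b Cab Nab _]; first exact: K0_delta.
have E0 p q : sim p q -> E u v (p, q) = 0.
  by rewrite deltaE; case: ((p, q) =P (u, v)) => [[-> ->] [_ Hvu] //|].
by rewrite !E0 //; apply: sim_refl.
Qed.

Lemma delta_rad_set_solvable a u v : solvable_block a -> sim a u -> sim a v ->
  rad_set (E u v).
Proof.
move=> Ha Cau Cav; split=> [|a' b' Cab Nab Na'].
  exact/K0_delta/(sim_trans (sim_sym Cau) Cav).1.
have E0 p q : ~ solvable_block p -> E u v (p, q) = 0.
  rewrite deltaE; case: ((p, q) =P (u, v)) => [[-> _] Nu|//].
  by case: Nu; apply: solvable_block_sim Ha Cau.
by rewrite !E0 //; apply: nonsolvable_block_sim Na' Cab.
Qed.

Lemma rad_gens_rad_set x : rad_gens s t Z x -> rad_set x.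
Proof.
case=> [[a ->]|[[u [v [_ _ /inL0P Huv Nvu ->]]]|[H2 [a [b [Nab Pab Aab Hcl Hx]]]]]].
- exact: block_identity_rad_set.
- by apply: delta_rad_set_strict Huv _ => /inL0P.
have Cab : sim a b by apply/simP.
have Ha : solvable_block a.
  split=> //; exists b; first by rewrite eq_sym.
  by split=> // c /simP [Pac Aac]; apply: Hcl.
have Ca := sim_refl a.
by case: Hx => ->; apply: (delta_rad_set_solvable Ha).
Qed.

Definition class_rep u := odflt u [pick w | `[< sim u w >]].

Lemma sim_class_rep u : sim u (class_rep u).
Proof. by rewrite /class_rep; case: pickP => [w /asboolP //|_]; apply: sim_refl. Qed.

Lemma class_rep_sim u v : sim u v -> class_rep u = class_rep v.
Proof.
move=> Cuv; rewrite /class_rep (eq_pick (_ : _ =1 [pred w | `[< sim v w >]])) => [|w /=].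
  by case: pickP => //= Nv; have := Nv v; rewrite /= asboolT //; apply: sim_refl.
by apply/asboolP/asboolP; [apply: sim_trans (sim_sym Cuv) | apply: sim_trans Cuv].
Qed.

Lemma rad_set_decomp x : rad_set x -> x =
  \sum_(p : A * A) scl ((p.1 != p.2)%:R * x p) (E p.1 p.2)
  + \sum_w scl (`[< solvable_block w >]%:R * x (w, w)) (E w w)
  + \sum_w scl (`[< ~ solvable_block w /\ class_rep w = w >]%:R * x (w, w))
               (block_identity w).
Proof.
move=> [_ Hx]; apply/ffunP => [[u v]]; rewrite !ffunE !sum_ffunE.
rewrite (sum_supp1 (i0 := (u, v))) => [|p Np]; last first.
  by rewrite sclE deltaE -surjective_pairing [(u, v) == p]eq_sym (negbTE Np) mulr0.
rewrite [X in _ + X + _](sum_supp1 (i0 := u)) => [|w Nw]; last first.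
  by rewrite sclE deltaE xpair_eqE eq_sym (negbTE Nw) mulr0.
rewrite [X in _ + X](sum_supp1 (i0 := class_rep u)) => [|w Nw]; last first.
  rewrite sclE block_identityE; case: asboolP => [[_ Ew]|_]; last by rewrite !mul0r.
  case: asboolP => [Cwu|_]; last by rewrite andbF mulr0.
  by move: Nw; rewrite -(class_rep_sim Cwu) Ew eqxx.
have Cru : sim (class_rep u) u by apply/sim_sym/sim_class_rep.
rewrite !sclE !deltaE block_identityE /= !eqxx /= (asboolT Cru) andbT xpair_eqE eqxx /=.
rewrite (class_rep_sim Cru); have [<-|Nuv] /= := eqVneq u v; last first.
  by rewrite !mulr0 !addr0 mulr1 mul1r.
rewrite !mulr1 mul0r add0r.
case: (pselect (solvable_block u)) => [Hu|Nu].
  rewrite (asboolT Hu) asboolF ?mul0r ?addr0 ?mul1r // => [[Nu _]].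
  by apply/Nu/(solvable_block_sim Hu)/sim_sym.
rewrite (asboolF Nu) asboolT ?mul0r ?add0r ?mul1r; last first.
  by split=> //; apply: nonsolvable_block_sim Nu (sim_sym Cru).
have [->//|N] := eqVneq (class_rep u) u.
by rewrite (Hx u (class_rep u) (sim_class_rep u) _ Nu).2 // eq_sym.
Qed.

Local Notation gens := (rad_gens s t Z (k := k)).

Lemma spanW_scl_gens c g : c = 0 \/ gens g -> spanW gens (scl c g).
Proof. by case=> [->|Hg]; [rewrite scl0; apply: spanW0 | apply/spanWZ/spanW_in]. Qed.

Lemma rad_set_span_gens x : rad_set x -> spanW gens x.
Proof.
move=> Rx; have [Kx Hx] := Rx; rewrite (rad_set_decomp Rx).
apply: spanWD; [apply: spanWD|]; apply: spanW_sum => /=.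
- case=> a b /=; apply: spanW_scl_gens.
  have [->|Nab] /= := eqVneq a b; first by left; rewrite mul0r.
  have [->|/[dup] Hxab /(adm_of_K0 Kx) Hab] := eqVneq (x (a, b)) 0; first by left; rewrite mulr0.
  right; case: (pselect (adm b a)) => [Hba|Nba]; last first.
    by right; left; exists a, b; split=> //; [exact: Hab.1 | apply/inL0P | move/inL0P].
  have Cab : sim a b by [].
  case: (pselect (solvable_block a)) => [Ha|Na]; last first.
    by move/eqP: Hxab; rewrite (Hx a b Cab Nab Na).1.
  right; right; split; first by case: Ha.
  have /simP [Pab Aab] := Cab.
  exists a, b; split=> //; last exact: Or31.
  by move=> b' Pab' Aab'; apply: (solvable_block_two Ha Cab Nab); apply/simP.
- move=> w; apply: spanW_scl_gens.
  case: (pselect (solvable_block w)) => [Hw|Nw]; last by left; rewrite asboolF ?mul0r.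
  have [H2 [w' Nw' [Cww' Hcl]]] := Hw.
  have /simP [Pww' Aww'] := Cww'.
  right; right; right; split=> //; exists w, w'; split; rewrite 1?eq_sym //; last exact: Or33.
  by move=> b Pwb Awb; apply: Hcl; apply/simP.
- by move=> w; apply: spanW_scl_gens; right; left; exists w.
Qed.

Lemma rad_setE : addS (spanW gens) D0 = rad_set.
Proof.
apply: funext => x; apply: propext; split=> [[u [d [Hu [Hd ->]]]]|Rx].
  have [_ [RD _]] := rad_set_subspace; apply: RD.
    by apply: spanW_min rad_set_subspace _ _ Hu => y; apply: rad_gens_rad_set.
  exact/par_scalar_rad_set/D0_par_scalar.
by exists x, 0; split; [exact: rad_set_span_gens | split; [exact: spanW0 | rewrite addr0]].
Qed.

End Radical.

Theorem theorem3p10 (k : closedFieldType) (V A : finType) (s t : A -> V)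
    (Z : pred (seq A)) :
  quiver_connected s t ->
  Z_paths_len_ge2 s t Z ->
  Z_minimal Z ->
  B_finite s t Z ->
  L0_radical s t Z (k := k)
    (addS (spanW (rad_gens s t Z (k := k))) (D0 s t (k := k))).
Proof.
move=> _ HZ Hmin _; rewrite (rad_setE k HZ Hmin); split.
- exact: rad_set_ideal.
- exact: rad_set_solvable.
- exact: solvable_ideal_sub_rad_set.
Qed.
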